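(* Let $F=P_{\ell_1}\cup\cdots\cup P_{\ell_k}$ be a linear forest with $k\ge2$, $\ell_1\ge\cdots\ge\ell_k\ge2$ and $\ell_i\ne 3$ for all $i$. If the graph $P_{2\delta_F+1}\cup P_{\delta_F}$ is $F$-free, then either $F\in\{5P_5,\ 2P_\ell,\ P_{\ell+1}\cup P_\ell\}$ for some integer $\ell$, or $F\in\{P_{\ell+2}\cup P_\ell,\ 2P_\ell\cup P_2\}$ for some odd integer $\ell$.
   Context: $P_m$ is the path on $m$ vertices; $G\cup H$ is disjoint union and $tG$ is $t$ disjoint copies of $G$. $\delta_F=\sum_{i=1}^k\lfloor \ell_i/2\rfloor-1$. A graph is $F$-free if it has no subgraph isomorphic to $F$. *)

From mathcomp Require Import all_boot.
Set Implicit Arguments. Unset Strict Implicit. Unset Printing Implicit Defensive.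

(* Linear forest P_{l_1} u ... u P_{l_k}, encoded by the list [:: l_1; ...; l_k].
   Vertices: pairs (i, a) with i < k and a < l_i; edges join (i,a),(i,a+1). *)
Definition lf_vert (ls : seq nat) : finType :=
  {i : 'I_(size ls) & 'I_(nth 0 ls i)}.

Arguments lf_vert : clear implicits.
Definition lf_edge (ls : seq nat) : rel (lf_vert ls) :=
  fun x y => (val (tag x) == val (tag y)) &&
             (((val (tagged x)).+1 == val (tagged y)) || ((val (tagged y)).+1 == val (tagged x))).

Definition contains_subgraph (VH VG : finType) (eH : rel VH) (eG : rel VG) : Prop :=
  exists f : VH -> VG, injective f /\ forall x y, eH x y -> eG (f x) (f y).

Definition lf_free (ms ls : seq nat) : Prop :=
  ~ contains_subgraph (@lf_edge ls) (@lf_edge ms).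

Definition deltaF (ls : seq nat) : nat := (\sum_(l <- ls) l./2) - 1.

From mathcomp Require Import all_boot zify.

Set Implicit Arguments.
Unset Strict Implicit.
Unset Printing Implicit Defensive.

(* Let F = P_{l_1} u ... u P_{l_k} with l_1 >= ... >= l_k >= 2 and no l_i = 3.
   Write H = \sum_i floor(l_i/2), so that delta_F = H - 1, and o for the number
   of odd l_i, so that F has 2H + o vertices.
   1. Packing: if the paths of F are split into two classes of total lengths at
      most c0 and c1, then F embeds into P_c0 u P_c1 (lay each class end to end).
   2. Gap: if P_{2 delta_F + 1} u P_{delta_F} is F-free, no class of paths has
      total length s with o < s <= H - 1, for such a class would fit into
      P_{delta_F} and the remaining 2H + o - s <= 2H - 1 vertices into the
      other path.
   3. k = 2: the gap for the class {P_{l_2}} gives l_2 >= H, i.e. l_1 <= l_2 + 2,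
      with l_2 odd when l_1 = l_2 + 2.
   4. k >= 3: the suffix sums T_i = l_i + ... + l_k drop from 2H + o to 0, so some
      T_i > o >= T_{i+1}, and the gap gives T_i >= H.  If l_i <= o then H <= 2o,
      which forces every l_j = 5 (floor(l/2) >= 2 odd(l), with equality only for
      l = 5), and then k = 5.  Otherwise the gap gives l_i >= H, and comparing
      with H >= floor(l_1/2) + floor(l_i/2) + (k - 2) forces F = 2P_l u P_2, l odd. *)

Section Packing.
Variables (ls : seq nat) (m : pred nat) (c0 c1 : nat).
Local Notation k := (size ls).
Local Notation a := (nth 0 ls).
Hypothesis cap0 : \sum_(0 <= j < k | ~~ m j) a j <= c0.
Hypothesis cap1 : \sum_(0 <= j < k | m j) a j <= c1.

Definition class_prefix (b : bool) (n : nat) : nat :=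
  \sum_(0 <= j < n | m j == b) a j.

Lemma class_prefix_mono b n n' : n <= n' -> class_prefix b n <= class_prefix b n'.
Proof. by move=> le_nn'; rewrite /class_prefix (big_cat_nat (leq0n n) le_nn') leq_addr. Qed.

Lemma class_prefixS n : class_prefix (m n) n.+1 = class_prefix (m n) n + a n.
Proof. by rewrite /class_prefix big_mkcond big_nat_recr //= eqxx -big_mkcond. Qed.

Lemma class_prefix_total b : class_prefix b k <= nth 0 [:: c0; c1] b.
Proof.
case: b; [apply: leq_trans cap1 | apply: leq_trans cap0];
  by apply: eq_leq; apply: eq_bigl => j; case: (m j).
Qed.

Lemma pack_fit (x : lf_vert ls) :
  class_prefix (m (tag x)) (tag x) + tagged x < nth 0 [:: c0; c1] (m (tag x)).
Proof.
case: x => i t /=.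
apply: leq_trans (class_prefix_total _).
rewrite (leq_trans _ (class_prefix_mono _ (ltn_ord i))) //.
by rewrite class_prefixS ltn_add2l.
Qed.

Definition pack (x : lf_vert ls) : lf_vert [:: c0; c1] :=
  @Tagged _ (@Ordinal 2 (m (tag x)) (leq_b1 _)) (fun c => 'I_(nth 0 [:: c0; c1] c))
          (Ordinal (pack_fit x)).

Lemma pack_sep i i' (t : 'I_(a i)) : i < i' -> m i = m i' ->
  class_prefix (m i) i + t < class_prefix (m i') i'.
Proof.
move=> lt_ii' <-; rewrite (leq_trans _ (class_prefix_mono _ lt_ii')) //.
by rewrite class_prefixS ltn_add2l.
Qed.

Lemma pack_inj : injective pack.
Proof.
move=> [i t] [i' t'] E.
have [/= Em Eo] := congr1 (fun z : lf_vert [:: c0; c1] => (val (tag z), val (tagged z))) E.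
have {}Em : m i = m i' by case: (m i) (m i') Em => [] [].
have Ei : i = i' :> nat.
  case: (ltngtP i i') => // [lt_ii' | lt_i'i].
  - by have := pack_sep t lt_ii' Em; rewrite /= in Eo; lia.
  - by have := pack_sep t' lt_i'i (esym Em); rewrite /= in Eo; lia.
move: t' Eo {E Em}; rewrite -(val_inj Ei) => t' /= /eqP; rewrite eqn_add2l => /eqP Et.
by rewrite (val_inj Et).
Qed.

Lemma pack_edge x y : lf_edge x y -> lf_edge (pack x) (pack y).
Proof.
case: x y => [i t] [i' t']; rewrite /lf_edge /= => /andP [/eqP/val_inj Ei].
by subst i'; rewrite eqxx -!addnS !eqn_add2l.
Qed.

Lemma packing : contains_subgraph (@lf_edge ls) (@lf_edge [:: c0; c1]).
Proof. by exists pack; split; [exact: pack_inj | exact: pack_edge]. Qed.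
End Packing.

Definition halfsum (ls : seq nat) : nat := \sum_(l <- ls) l./2.
Definition oddcount (ls : seq nat) : nat := \sum_(l <- ls) odd l.

Lemma total_length ls :
  \sum_(0 <= j < size ls) nth 0 ls j = (halfsum ls).*2 + oddcount ls.
Proof.
rewrite -(big_nth 0 xpredT id) /halfsum /oddcount -muln2 big_distrl -big_split.
by apply: eq_bigr => l _; rewrite /= muln2 addnC odd_double_half.
Qed.

Lemma class_gap ls (m : pred nat) :
  lf_free [:: (deltaF ls).*2.+1; deltaF ls] ls ->
  \sum_(0 <= j < size ls | m j) nth 0 ls j <= oddcount ls \/
  halfsum ls <= \sum_(0 <= j < size ls | m j) nth 0 ls j.
Proof.
move=> free; set s := \sum_(0 <= j < size ls | m j) nth 0 ls j.
case: (leqP s (oddcount ls)) => [|gt_so]; [by left | right].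
rewrite leqNgt; apply/negP => lt_sH; apply: free.
have := total_length ls; rewrite (bigID m) /= -/s => total.
by apply: (packing (m := m)); rewrite /deltaF -/(halfsum ls) -/s; lia.
Qed.

(* Each l >= 2 with l <> 3 has floor(l/2) >= 2 odd(l), with equality only for
   l = 5; summed up, 2o <= H, with equality only if all lengths are 5. *)
Lemma five_extremal ls :
  all (fun l => 2 <= l) ls -> all (fun l => l != 3) ls ->
  (oddcount ls).*2 <= halfsum ls /\ (halfsum ls <= (oddcount ls).*2 -> all (pred1 5) ls).
Proof.
elim: ls => [|l r IH]; first by rewrite /halfsum /oddcount !big_nil.
move=> /= /andP [l2 ge2r] /andP [l3 ne3r].
have [le_r eq_r] := IH ge2r ne3r.
rewrite /halfsum /oddcount !big_cons -/(halfsum r) -/(oddcount r).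
split=> [|le_lr]; first lia.
by apply/andP; split; [apply/eqP; lia | apply: eq_r; lia].
Qed.

Lemma threshold_crossing (f : nat -> nat) c n :
  c < f 0 -> f n <= c -> exists2 i, i < n & f i.+1 <= c < f i.
Proof.
move=> lt_c0; elim: n => [|n IH] le_fn; first lia.
case: (ltnP c (f n)) => [lt_cn | le_nc]; first by exists n; rewrite ?le_fn.
by have [i lt_in cross] := IH le_nc; exists i; first exact: ltnW.
Qed.

Lemma sum_ge_pair (F : nat -> nat) n i j :
  i < n -> j < n -> i != j -> F i + F j <= \sum_(0 <= t < n) F t.
Proof.
move=> lt_in lt_jn ne_ij.
have -> : F i + F j = \sum_(t <- [:: i; j]) F t by rewrite !big_cons big_nil addn0.
apply: (uniq_sub_le_big (le := leq) leqnn (fun x y => leq_addr y x)).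
- by rewrite /= inE ne_ij.
- exact: iota_uniq.
- by move=> t; rewrite !inE mem_index_iota => /orP [] /eqP ->; lia.
Qed.

Section LinearForest.
Variable ls : seq nat.
Local Notation k := (size ls).
Local Notation a := (nth 0 ls).
Local Notation H := (halfsum ls).
Local Notation o := (oddcount ls).
Local Notation tail i := (\sum_(i <= j < k) a j).
Hypothesis free : lf_free [:: (deltaF ls).*2.+1; deltaF ls] ls.
Hypothesis ge2 : all (fun l => 2 <= l) ls.
Hypothesis ne3 : all (fun l => l != 3) ls.
Hypothesis nonincr : sorted geq ls.

Lemma entry_ge2 j : j < k -> 2 <= a j.
Proof. by move=> lt_jk; apply: (allP ge2); rewrite mem_nth. Qed.

Lemma entry_ne3 j : j < k -> a j != 3.
Proof. by move=> lt_jk; apply: (allP ne3); rewrite mem_nth. Qed.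

Lemma entry_mono i j : i <= j -> j < k -> a j <= a i.
Proof.
move=> le_ij lt_jk.
have geq_trans : transitive geq by move=> y x z le_yx le_zy; exact: leq_trans le_zy le_yx.
by apply: (sorted_leq_nth geq_trans leqnn 0 nonincr) => //; rewrite inE; lia.
Qed.

Lemma list_of_entries n : k = n -> ls = mkseq a n.
Proof. by move=> <-; rewrite mkseq_nth. Qed.

Lemma gap_single i : i < k -> a i <= o \/ H <= a i.
Proof.
move=> lt_ik; have := class_gap (pred1 i) free.
by rewrite -big_filter filter_pred1_uniq ?iota_uniq ?mem_index_iota // big_seq1.
Qed.

Lemma gap_suffix i : tail i <= o \/ H <= tail i.
Proof. by rewrite (big_nat_widenl _ _ _ _ _ (leq0n i)); exact: class_gap. Qed.

(* Every floor(l_j/2) is at least 1, so two chosen terms plus k - 2 bound H. *)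
Lemma halfsum_pair_bound i j : i < k -> j < k -> i != j ->
  (a i)./2 + (a j)./2 + (k - 2) <= H.
Proof.
move=> lt_ik lt_jk ne_ij.
have halves : H = \sum_(0 <= t < k) ((a t)./2 - 1) + \sum_(0 <= t < k) 1.
  rewrite /halfsum (big_nth 0) -big_split; apply: eq_big_nat => t /andP [_ lt_tk].
  by have := entry_ge2 lt_tk; rewrite /=; lia.
have := sum_ge_pair (fun t => (a t)./2 - 1) lt_ik lt_jk ne_ij.
have := entry_ge2 lt_ik; have := entry_ge2 lt_jk.
by rewrite halves sum_nat_const_nat; lia.
Qed.

Lemma two_paths : k = 2 ->
  (exists l, ls = [:: l; l] \/ ls = [:: l.+1; l]) \/ (exists l, odd l /\ ls = [:: l.+2; l]).
Proof.
move=> k2; have Els : ls = [:: a 0; a 1] by rewrite {1}(list_of_entries k2).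
have sumH : H = (a 0)./2 + (a 1)./2 by rewrite /halfsum [in LHS]Els !big_cons big_nil addn0.
have sumo : o = odd (a 0) + odd (a 1) by rewrite /oddcount [in LHS]Els !big_cons big_nil addn0.
have lt0k : 0 < k by rewrite k2.
have lt1k : 1 < k by rewrite k2.
have := gap_single lt1k; rewrite sumH sumo => gap.
have := entry_mono (leq0n 1) lt1k; have := entry_ge2 lt0k; have := entry_ge2 lt1k.
have := entry_ne3 lt0k; have := entry_ne3 lt1k => *.
have : a 0 = a 1 \/ a 0 = (a 1).+1 \/ (a 0 = (a 1).+2 /\ odd (a 1)) by lia.
case=> [E | [E | [E odd_y]]]; rewrite Els E.
- by left; exists (a 1); left.
- by left; exists (a 1); right.
- by right; exists (a 1).
Qed.

Lemma all_fives_case i :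
  i < k -> tail i.+1 <= o -> H <= tail i -> a i <= o -> ls = nseq 5 5.
Proof.
move=> lt_ik small_tail big_tail le_ao.
have le_H2o : H <= o.*2 by move: big_tail; rewrite big_ltn //; lia.
have /all_pred1P Els : all (pred1 5) ls by exact: (five_extremal ge2 ne3).2.
have tail_fives j : tail j = 5 * (k - j).
  rewrite (eq_big_nat _ _ (F2 := fun=> 5)) => [|t /andP [_ lt_tk]].
    by rewrite sum_nat_const_nat mulnC.
  by rewrite Els nth_nseq lt_tk.
have o_fives : o = k by rewrite /oddcount [in LHS]Els big_nseq iter_addn_0 mul1n.
have H_fives : H = k.*2 by rewrite /halfsum [in LHS]Els big_nseq iter_addn_0 mulnC muln2.
have a_five : a i = 5 by rewrite Els nth_nseq lt_ik.
have k5 : k = 5 by move: small_tail big_tail; rewrite !tail_fives; lia.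
by rewrite Els k5.
Qed.

(* Step 4, second case: the crossing path is at least H long, so F = 2P_l u P_2
   with l odd (the case i = 0 is impossible since then l_1 >= 2H). *)
Lemma long_path_case i : 3 <= k -> i < k -> tail i.+1 <= o -> H <= a i ->
  exists l, odd l /\ ls = [:: l; l; 2].
Proof.
move=> ge3k lt_ik small_tail big_ai.
have lt0k : 0 < k by lia.
have lt1k : 1 < k by lia.
have lt2k : 2 < k by lia.
have ge2a1 := entry_ge2 lt1k; have ge2a2 := entry_ge2 lt2k.
case: i => [|i] in lt_ik small_tail big_ai *.
  (* l_1 = 2H + o - T_2 >= 2H > l_1 *)
  have := halfsum_pair_bound lt0k lt1k isT.
  by have := total_length ls; rewrite big_ltn //; lia.
(* l_i >= H >= floor(l_1/2) + floor(l_i/2) + (k - 2) with l_1 >= l_i *)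
have k3 : k = 3.
  have := halfsum_pair_bound lt0k lt_ik isT.
  by have := entry_mono (leq0n i.+1) lt_ik; lia.
have Els : ls = [:: a 0; a 1; a 2] by rewrite {1}(list_of_entries k3).
have sumH : H = (a 0)./2 + (a 1)./2 + (a 2)./2.
  by rewrite /halfsum [in LHS]Els !big_cons big_nil addn0 addnA.
have := entry_mono (leq0n 1) lt1k; have := entry_mono (leqnSn 1) lt2k.
have := entry_ne3 lt0k; have := entry_ne3 lt1k; have := entry_ne3 lt2k.
have {}big_ai : H <= a 1 \/ H <= a 2.
  by case: i => [|[|i]] in lt_ik small_tail big_ai *; [left | right | lia].
rewrite sumH in big_ai => *.
exists (a 1); split; first lia.
by rewrite [LHS]Els; congr [:: _; _; _]; lia.
Qed.

Lemma many_paths : 3 <= k -> ls = nseq 5 5 \/ exists l, odd l /\ ls = [:: l; l; 2].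
Proof.
move=> ge3k.
have H_pos : 0 < H.
  by have := halfsum_pair_bound (_ : 0 < k) (_ : 1 < k) isT; lia.
have [i lt_ik /andP [small_tail gt_tail]] : exists2 i, i < k & tail i.+1 <= o < tail i.
  apply: threshold_crossing; last by rewrite big_geq.
  by rewrite total_length; lia.
have big_tail : H <= tail i by case: (gap_suffix i) => //; lia.
case: (leqP (a i) o) => [le_ao | gt_ao].
  by left; exact: all_fives_case big_tail le_ao.
have big_ai : H <= a i by case: (gap_single lt_ik) => //; lia.
by right; exact: long_path_case ge3k lt_ik small_tail big_ai.
Qed.
End LinearForest.

Theorem mainTheorem4 (ls : seq nat) :
  2 <= size ls ->
  sorted geq ls ->
  all (fun l => 2 <= l) ls ->
  all (fun l => l != 3) ls ->
  lf_free [:: (deltaF ls).*2.+1; deltaF ls] ls ->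
  (ls = nseq 5 5 \/
   (exists l : nat, ls = [:: l; l] \/ ls = [:: l.+1; l]) \/
   (exists l : nat, odd l /\ (ls = [:: l.+2; l] \/ ls = [:: l; l; 2]))).
Proof.
move=> ge2k nonincr ge2 ne3 free.
have [k2 | ge3k] : size ls = 2 \/ 3 <= size ls by lia.
- case: (two_paths free ge2 ne3 nonincr k2) => [shape | [l [odd_l ->]]]; right.
    by left.
  by right; exists l; split; [|left].
- case: (many_paths free ge2 ne3 nonincr ge3k) => [-> | [l [odd_l ->]]]; first by left.
  by right; right; exists l; split; [|right].
Qed.
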